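(* Let $A,B\in\mathrm{SL}_2\mathbb{Z}$ be noncommuting, well oriented, with $2\le\mathrm{tr}(A)<\mathrm{tr}(B)$. If $[ab]<[b^2]$, then for every $s\ge1$ and $k_1,\dots,k_s\ge1$ we have $[ab^{k_1}ab^{k_2}\cdots ab^{k_s}]<[b^{k_1+\cdots+k_s+s}]$.
   Context: Words are finite strings over $\{a,b\}$; $\phi$ is the homomorphism with $\phi(a)=A,\phi(b)=B$, and $[w]=\mathrm{tr}(\phi(w))$. Fixed points are for the Möbius action on $\partial\mathcal{H}=\mathbb{P}^1\mathbb{R}$; $\alpha^\pm$ ($\beta^\pm$) are the attracting/repelling fixed points of $A$ ($B$), both equal to the unique fixed point if parabolic. With $\partial\mathcal{H}$ cyclically ordered and $[\alpha,\beta]$ the closed counterclockwise interval from $\alpha$ to $\beta$, let $I^+=\{\alpha^+\}$ if $\alpha^+=\beta^+$, and otherwise the one of $[\alpha^+,\beta^+],[\beta^+,\alpha^+]$ mapped into itself by both $A$ and $B$ (if it exists); define $I^-$ likewise with $A^{-1},B^{-1},\alpha^-,\beta^-$. The pair is coherently oriented if both exist, and well oriented if $A,B$ is coherently oriented but $A,B^{-1}$ is not. *)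

From HB Require Import structures.
From mathcomp Require Import all_boot all_order all_algebra.
From mathcomp Require Import Rstruct.
From Stdlib Require Rdefinitions.
Notation R := Rdefinitions.R.
Set Implicit Arguments. Unset Strict Implicit. Unset Printing Implicit Defensive.
Import Order.TTheory GRing.Theory Num.Theory.
Local Open Scope ring_scope.

Inductive letter := La | Lb.

Definition word := seq letter.

Definition phi (A B : 'M[int]_2) (w : word) : 'M[int]_2 :=
  \prod_(l <- w) (if l is La then A else B).

Definition trw (A B : 'M[int]_2) (w : word) : int := \tr (phi A B w).

Definition SL2Z (A : 'M[int]_2) : Prop := \det A = 1.

(* [None] is the point at infinity. *)
Definition P1 := option R.

Definition ent (M : 'M[int]_2) (i j : 'I_2) : R := (M i j)%:~R.

Definition mob (M : 'M[int]_2) (p : P1) : P1 :=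
  let a := ent M 0 0 in let b := ent M 0 1 in
  let c := ent M 1 0 in let d := ent M 1 1 in
  match p with
  | Some x => if c * x + d == 0 then None else Some ((a * x + b) / (c * x + d))
  | None => if c == 0 then None else Some (a / c)
  end.

(* homogeneous coordinates of a point: Some t ~ (t,1), oo ~ (1,0) *)
Definition hx (p : P1) : R := if p is Some t then t else 1.
Definition hy (p : P1) : R := if p is Some _ then 1 else 0.

Definition eigenpt (M : 'M[int]_2) (lam : R) (p : P1) : Prop :=
  ent M 0 0 * hx p + ent M 0 1 * hy p = lam * hx p /\
  ent M 1 0 * hx p + ent M 1 1 * hy p = lam * hy p.

(* attracting fixed point: eigenline of the eigenvalue of modulus >= 1
   (for hyperbolic M the dominant eigenvalue; for parabolic M the unique
   fixed point); repelling: eigenvalue of modulus <= 1. *)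
Definition attr_fix (M : 'M[int]_2) (p : P1) : Prop :=
  exists lam : R, 1 <= `|lam| /\ eigenpt M lam p.
Definition rep_fix (M : 'M[int]_2) (p : P1) : Prop :=
  exists lam : R, `|lam| <= 1 /\ eigenpt M lam p.

(* Cyclic order on P^1(R): traverse R in increasing direction, then oo.
   [le1] is the linear order with oo as top element. *)
Definition le1 (p q : P1) : bool :=
  match p, q with
  | Some x, Some y => x <= y
  | _, None => true
  | None, Some _ => false
  end.

(* closed counterclockwise interval [p, q] from p to q *)
Definition arc (p q : P1) : P1 -> bool :=
  fun x => if le1 p q then le1 p x && le1 x q else le1 p x || le1 x q.

Definition maps_into_itself (M : 'M[int]_2) (I : P1 -> bool) : Prop :=
  forall x, I x -> I (mob M x).

Definition I_exists (M N : 'M[int]_2) (p q : P1) : Prop :=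
  p = q \/
  exists I, (I = arc p q \/ I = arc q p) /\
            maps_into_itself M I /\ maps_into_itself N I.

Definition coherently_oriented (A B : 'M[int]_2) : Prop :=
  exists ap am bp bm : P1,
    attr_fix A ap /\ rep_fix A am /\ attr_fix B bp /\ rep_fix B bm /\
    I_exists A B ap bp /\ I_exists (invmx A) (invmx B) am bm.

Definition well_oriented (A B : 'M[int]_2) : Prop :=
  coherently_oriented A B /\ ~ coherently_oriented A (invmx B).

Definition ab_word (ks : seq nat) : word :=
  flatten [seq La :: nseq k Lb | k <- ks].

(* Conjugating by the basis of attracting fixed points of A and B (or, when these
   coincide, of repelling ones, after passing to inverses) makes A upper and B lower
   triangular, with diagonals (a, 1/a) and (1/b, b), b >= 1.  The invariant arc
   forces the off-diagonal entries x of A and t of B to have the same sign, and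
   conjugating by diag(1, -1) makes both nonnegative.  The hypothesis [ab] < [b^2]
   then yields a positive row vector f with f A < b f and f B <= b f entrywise, so
   f W < b^n f for every word W of length n that contains the letter a.  This puts
   the Perron root of W below b^n, whence tr W < b^n + b^-n = tr B^n. *)

From Pilot Require Import Defs.
From mathcomp Require Import all_boot all_order all_algebra.
From mathcomp Require Import Rstruct.
From mathcomp.algebra_tactics Require Import ring lra.
Import Order.TTheory GRing.Theory Num.Theory.
Local Open Scope ring_scope.

Set Implicit Arguments.
Unset Strict Implicit.
Unset Printing Implicit Defensive.

(* Entrywise 2x2 matrices, so that matrix identities are closed by [ring]. *)
Record mat2 (F : Type) := Mat2 { m00 : F; m01 : F; m10 : F; m11 : F }.

Lemma mat2_ext (F : Type) (X Y : mat2 F) :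
  m00 X = m00 Y -> m01 X = m01 Y -> m10 X = m10 Y -> m11 X = m11 Y -> X = Y.
Proof. by case: X => ? ? ? ?; case: Y => ? ? ? ? /= -> -> -> ->. Qed.

Section Mat2Ring.
Variable F : comPzRingType.
Implicit Types (X Y Z M : mat2 F) (w : word).

Definition mul2 X Y : mat2 F :=
  Mat2 (m00 X * m00 Y + m01 X * m10 Y) (m00 X * m01 Y + m01 X * m11 Y)
       (m10 X * m00 Y + m11 X * m10 Y) (m10 X * m01 Y + m11 X * m11 Y).
Definition one2 : mat2 F := Mat2 1 0 0 1.
Definition tr2 X : F := m00 X + m11 X.
Definition det2 X : F := m00 X * m11 X - m01 X * m10 X.
Definition adj2 X : mat2 F := Mat2 (m11 X) (- m01 X) (- m10 X) (m00 X).

Definition eigvec2 M (lam x y : F) : Prop :=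
  m00 M * x + m01 M * y = lam * x /\ m10 M * x + m11 M * y = lam * y.

Fixpoint word2 X Y w : mat2 F :=
  if w is l :: w' then mul2 (if l is La then X else Y) (word2 X Y w') else one2.

Lemma mul2A X Y Z : mul2 X (mul2 Y Z) = mul2 (mul2 X Y) Z.
Proof. by apply: mat2_ext => /=; ring. Qed.

Lemma mul1_2 X : mul2 one2 X = X.
Proof. by apply: mat2_ext => /=; ring. Qed.

Lemma mul2_1 X : mul2 X one2 = X.
Proof. by apply: mat2_ext => /=; ring. Qed.

Lemma det2_one : det2 one2 = 1.
Proof. by rewrite /det2 /=; ring. Qed.

Lemma det2M X Y : det2 (mul2 X Y) = det2 X * det2 Y.
Proof. by rewrite /det2 /=; ring. Qed.

Lemma tr2C X Y : tr2 (mul2 X Y) = tr2 (mul2 Y X).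
Proof. by rewrite /tr2 /=; ring. Qed.

Lemma tr2_sqr X : tr2 (mul2 X X) = tr2 X ^+ 2 - 2 * det2 X.
Proof. by rewrite /tr2 /det2 /=; ring. Qed.

Lemma adj2M X Y : adj2 (mul2 X Y) = mul2 (adj2 Y) (adj2 X).
Proof. by apply: mat2_ext => /=; ring. Qed.

Lemma tr2_adj X : tr2 (adj2 X) = tr2 X.
Proof. by rewrite /tr2 addrC. Qed.

Lemma det2_adj X : det2 (adj2 X) = det2 X.
Proof. by rewrite /det2 /=; ring. Qed.

Lemma adj2_unique X Y : det2 X = 1 -> mul2 X Y = one2 -> Y = adj2 X.
Proof.
move=> dX XY; have adjXX : mul2 (adj2 X) X = one2.
  by apply: mat2_ext; rewrite /= -?dX /det2; ring.
by rewrite -[Y]mul1_2 -adjXX -mul2A XY mul2_1.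
Qed.

Lemma word2_cat X Y w1 w2 : word2 X Y (w1 ++ w2) = mul2 (word2 X Y w1) (word2 X Y w2).
Proof. by elim: w1 => [|l w1 IH] /=; rewrite ?mul1_2 // IH mul2A. Qed.

Lemma det2_word2 X Y w : det2 X = 1 -> det2 Y = 1 -> det2 (word2 X Y w) = 1.
Proof.
move=> dX dY; elim: w => [|l w IH] /=; first exact: det2_one.
by rewrite det2M IH mulr1; case: l.
Qed.

Lemma adj2_word2 X Y w : adj2 (word2 X Y w) = word2 (adj2 X) (adj2 Y) (rev w).
Proof.
elim: w => [|l w IH] /=; first by apply: mat2_ext; rewrite /= ?oppr0.
by rewrite adj2M IH rev_cons -cats1 word2_cat /= mul2_1; case: l.
Qed.

Lemma tr2_word2_rcons X Y w l : tr2 (word2 X Y (rcons w l)) = tr2 (word2 X Y (l :: w)).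
Proof. by rewrite -cats1 word2_cat tr2C /= mul2_1. Qed.

Lemma tr2_word2_nseq_lower X (a c d : F) n :
  tr2 (word2 X (Mat2 a 0 c d) (nseq n Lb)) = a ^+ n + d ^+ n.
Proof.
rewrite /tr2; suff [-> _ ->] : [/\ m00 (word2 X (Mat2 a 0 c d) (nseq n Lb)) = a ^+ n,
    m01 (word2 X (Mat2 a 0 c d) (nseq n Lb)) = 0 &
    m11 (word2 X (Mat2 a 0 c d) (nseq n Lb)) = d ^+ n] by [].
elim: n => [|n [IH00 IH01 IH11]] /=; first by rewrite !expr0.
by rewrite IH00 IH01 IH11 !exprS; split; ring.
Qed.

End Mat2Ring.

Section Eigenvectors.
Variable F : fieldType.
Implicit Types (M : mat2 F) (l x y : F).

Lemma eigvec2_char M l x y : eigvec2 M l x y -> x != 0 \/ y != 0 ->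
  l ^+ 2 - tr2 M * l + det2 M = 0.
Proof.
move=> [e1 e2] xy; set c := _ + det2 M.
have cx : c * x = 0.
  transitivity ((m11 M - l) * (m00 M * x + m01 M * y - l * x) -
                m01 M * (m10 M * x + m11 M * y - l * y)); first by rewrite /c /tr2 /det2; ring.
  by rewrite e1 e2 !subrr !mulr0 subrr.
have cy : c * y = 0.
  transitivity ((m00 M - l) * (m10 M * x + m11 M * y - l * y) -
                m10 M * (m00 M * x + m01 M * y - l * x)); first by rewrite /c /tr2 /det2; ring.
  by rewrite e1 e2 !subrr !mulr0 subrr.
by case: xy => [x0|y0]; [apply: (mulIf x0) | apply: (mulIf y0)]; rewrite mul0r.
Qed.

Lemma eigvec2_unique M l l' x y : eigvec2 M l x y -> eigvec2 M l' x y ->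
  x != 0 \/ y != 0 -> l = l'.
Proof.
move=> [e1 e2] [e1' e2'] [x0|y0].
  by apply: (mulIf x0); rewrite /= -e1 -e1'.
by apply: (mulIf y0); rewrite /= -e2 -e2'.
Qed.

Lemma eigvec2_adj M l x y : det2 M = 1 -> l != 0 -> eigvec2 M l x y ->
  eigvec2 (adj2 M) l^-1 x y.
Proof.
move=> dM l0 [e1 e2]; split; apply: (mulfI l0); rewrite mulrA mulfV // mul1r /=.
  transitivity (m11 M * (l * x) - m01 M * (l * y)); first ring.
  by rewrite -e1 -e2 -[RHS]mul1r -dM /det2; ring.
transitivity (m00 M * (l * y) - m10 M * (l * x)); first ring.
by rewrite -e1 -e2 -[RHS]mul1r -dM /det2; ring.
Qed.

End Eigenvectors.

Section Conjugation.
Variables (F : fieldType) (P : mat2 F).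
Hypothesis detP : det2 P != 0.
Implicit Types (X Y M : mat2 F).

Definition inv2 : mat2 F :=
  Mat2 (m11 P / det2 P) (- m01 P / det2 P) (- m10 P / det2 P) (m00 P / det2 P).

Definition conj2 M : mat2 F := mul2 inv2 (mul2 M P).

Lemma mul2V : mul2 P inv2 = one2 F.
Proof. by apply: mat2_ext; rewrite /= /det2; field. Qed.

Lemma mulV2 : mul2 inv2 P = one2 F.
Proof. by apply: mat2_ext; rewrite /= /det2; field. Qed.

Lemma mul2_conj2 M : mul2 P (conj2 M) = mul2 M P.
Proof. by rewrite /conj2 mul2A mul2V mul1_2. Qed.

Lemma conj2M X Y : conj2 (mul2 X Y) = mul2 (conj2 X) (conj2 Y).
Proof. by rewrite /conj2 -!mul2A (mul2A P) mul2V mul1_2. Qed.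

Lemma conj2_inj : injective conj2.
Proof.
by move=> X Y eXY; rewrite -[X]mul2_1 -[Y]mul2_1 -mul2V !mul2A -!mul2_conj2 eXY.
Qed.

Lemma tr2_conj2 M : tr2 (conj2 M) = tr2 M.
Proof. by rewrite /conj2 tr2C -mul2A mul2V mul2_1. Qed.

Lemma det2_conj2 M : det2 (conj2 M) = det2 M.
Proof. by rewrite /conj2 !det2M mulrCA -det2M mulV2 det2_one mulr1. Qed.

Lemma word2_conj2 X Y w : word2 (conj2 X) (conj2 Y) w = conj2 (word2 X Y w).
Proof.
elim: w => [|l w IH] /=; last by rewrite IH conj2M; case: l.
by rewrite /conj2 mul1_2 mulV2.
Qed.

Lemma conj2_eigvec_l M lam :
  eigvec2 M lam (m00 P) (m10 P) -> m10 (conj2 M) = 0 /\ m00 (conj2 M) = lam.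
Proof. by move: detP; rewrite /det2 => dP [e1 e2]; rewrite /= e1 e2 /det2; split; field. Qed.

Lemma conj2_eigvec_r M lam :
  eigvec2 M lam (m01 P) (m11 P) -> m01 (conj2 M) = 0 /\ m11 (conj2 M) = lam.
Proof. by move: detP; rewrite /det2 => dP [e1 e2]; rewrite /= e1 e2 /det2; split; field. Qed.

Lemma common_eigvec2_commute X Y a a' b b' :
  eigvec2 X a (m00 P) (m10 P) -> eigvec2 X a' (m01 P) (m11 P) ->
  eigvec2 Y b (m00 P) (m10 P) -> eigvec2 Y b' (m01 P) (m11 P) ->
  mul2 X Y = mul2 Y X.
Proof.
have diag M c c' : eigvec2 M c (m00 P) (m10 P) -> eigvec2 M c' (m01 P) (m11 P) ->
    conj2 M = Mat2 c 0 0 c'.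
  by move=> /conj2_eigvec_l[? ?] /conj2_eigvec_r[? ?]; apply: mat2_ext.
move=> /diag X1 /X1 {}X1 /diag Y1 /Y1 {}Y1.
by apply: conj2_inj; rewrite !conj2M X1 Y1; apply: mat2_ext => /=; ring.
Qed.

End Conjugation.

Section Flip.
Variable F : fieldType.

Definition flip2 : mat2 F := Mat2 1 0 0 (-1).

Lemma det2_flip2 : det2 flip2 != 0.
Proof. by rewrite /det2 /= mulr0 subr0 mulrN1 oppr_eq0 oner_eq0. Qed.

Lemma conj2_flip2 M :
  conj2 flip2 M = Mat2 (m00 M) (- m01 M) (- m10 M) (m11 M).
Proof. by apply: mat2_ext; rewrite /= /det2 /=; field; rewrite ?oppr_eq0 ?oner_eq0. Qed.

End Flip.

Section Positivity.
Variable F : realFieldType.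
Implicit Types (L M W X Y : mat2 F) (w : word).

Definition nonneg2 M := [/\ 0 <= m00 M, 0 <= m01 M, 0 <= m10 M & 0 <= m11 M].

Definition left_subeigvec2 (f1 f2 : F) M (r : F) :=
  f1 * m00 M + f2 * m10 M <= r * f1 /\ f1 * m01 M + f2 * m11 M <= r * f2.

Definition left_strict_subeigvec2 (f1 f2 : F) M (r : F) :=
  f1 * m00 M + f2 * m10 M < r * f1 /\ f1 * m01 M + f2 * m11 M < r * f2.

Lemma nonneg2M X Y : nonneg2 X -> nonneg2 Y -> nonneg2 (mul2 X Y).
Proof. by case=> ? ? ? ? [? ? ? ?]; split; rewrite /= addr_ge0 ?mulr_ge0. Qed.

Lemma nonneg2_word2 X Y w : nonneg2 X -> nonneg2 Y -> nonneg2 (word2 X Y w).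
Proof.
move=> nX nY; elim: w => [|l w IH] /=; first by split; rewrite /= ?ler01.
by apply: nonneg2M => //; case: l.
Qed.

Lemma left_strict_subeigvec2W f1 f2 M r :
  left_strict_subeigvec2 f1 f2 M r -> left_subeigvec2 f1 f2 M r.
Proof. by case=> /ltW ? /ltW ?. Qed.

Lemma left_subeigvec2M f1 f2 L W b c : 0 <= b -> nonneg2 W ->
  left_subeigvec2 f1 f2 L b -> left_subeigvec2 f1 f2 W c ->
  left_subeigvec2 f1 f2 (mul2 L W) (b * c).
Proof. by move=> b0 [? ? ? ?] [? ?] [? ?]; rewrite /left_subeigvec2 /=; split; nra. Qed.

Lemma weighted_sum_gt0 (d1 d2 a1 a2 : F) : 0 < d1 -> 0 < d2 ->
  0 <= a1 -> 0 <= a2 -> 0 < a1 + a2 -> 0 < d1 * a1 + d2 * a2.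
Proof.
move=> d1p d2p a1n a2n a12p.
have d2a2 := mulr_ge0 (ltW d2p) a2n.
have [a1p|a1z] := ltrP 0 a1; first by have := mulr_gt0 d1p a1p; lra.
have -> : a1 = 0 by lra.
by rewrite mulr0 add0r mulr_gt0 //; lra.
Qed.

Lemma nonneg2_det1_col_gt0 W : nonneg2 W -> det2 W = 1 ->
  0 < m00 W + m10 W /\ 0 < m01 W + m11 W.
Proof.
move=> [? ? ? ?]; rewrite /det2 => dW.
split; rewrite lt_def addr_ge0 // andbT; apply/eqP => col.
  have [e0 e1] : m00 W = 0 /\ m10 W = 0 by split; lra.
  by rewrite e0 e1 in dW; lra.
have [e0 e1] : m01 W = 0 /\ m11 W = 0 by split; lra.
by rewrite e0 e1 in dW; lra.
Qed.

Lemma row_mul2_lt W (u1 u2 v1 v2 : F) : nonneg2 W -> det2 W = 1 -> u1 < v1 -> u2 < v2 ->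
  u1 * m00 W + u2 * m10 W < v1 * m00 W + v2 * m10 W /\
  u1 * m01 W + u2 * m11 W < v1 * m01 W + v2 * m11 W.
Proof.
move=> nW dW lt1 lt2; have [col0 col1] := nonneg2_det1_col_gt0 nW dW.
case: nW => W00 W01 W10 W11.
have d1 : 0 < v1 - u1 by lra.
have d2 : 0 < v2 - u2 by lra.
have := weighted_sum_gt0 d1 d2 W00 W10 col0.
have := weighted_sum_gt0 d1 d2 W01 W11 col1.
by split; lra.
Qed.

Lemma left_strict_subeigvec2M f1 f2 L W b c : 0 <= b -> nonneg2 W -> det2 W = 1 ->
  left_strict_subeigvec2 f1 f2 L b -> left_subeigvec2 f1 f2 W c ->
  left_strict_subeigvec2 f1 f2 (mul2 L W) (b * c).
Proof.
move=> b0 nW dW [lt1 lt2] [le1 le2].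
have [] := row_mul2_lt nW dW lt1 lt2.
have := ler_wpM2l b0 le1; have := ler_wpM2l b0 le2.
by rewrite /left_strict_subeigvec2 /=; split; lra.
Qed.

Lemma left_subeigvec2_word2 f1 f2 X Y r : 0 <= r -> nonneg2 X -> nonneg2 Y ->
  left_subeigvec2 f1 f2 X r -> left_subeigvec2 f1 f2 Y r ->
  forall w, left_subeigvec2 f1 f2 (word2 X Y w) (r ^+ size w).
Proof.
move=> r0 nX nY sX sY; elim=> [|l w IH] /=.
  by rewrite /left_subeigvec2 /= expr0; split; lra.
by rewrite exprS; apply: left_subeigvec2M (nonneg2_word2 _ nX nY) _ IH; case: l.
Qed.

(* f certifies that r exceeds the Perron root of W: det (r - W) = r^2 - r tr W + 1 > 0. *)
Lemma left_strict_subeigvec2_trace W f1 f2 r : nonneg2 W -> det2 W = 1 ->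
  0 < f1 -> 0 < f2 -> left_strict_subeigvec2 f1 f2 W r ->
  r * tr2 W < r ^+ 2 + 1.
Proof.
move=> [_ W01 W10 _]; rewrite /det2 /tr2 => dW f1p f2p [lt0 lt1].
have lt10 : f2 * m10 W < f1 * (r - m00 W) by lra.
have lt01 : f1 * m01 W < f2 * (r - m11 W) by lra.
have := ltr_pM (mulr_ge0 (ltW f2p) W10) (mulr_ge0 (ltW f1p) W01) lt10 lt01.
have -> : f1 * (r - m00 W) * (f2 * (r - m11 W)) =
  f1 * f2 * (r ^+ 2 + 1 - r * (m00 W + m11 W)) + f2 * m10 W * (f1 * m01 W).
  by rewrite -dW; ring.
by rewrite ltrDr pmulr_rgt0 ?mulr_gt0 // subr_gt0.
Qed.

Lemma eigvec2_gt0 M l (x y : F) : det2 M = 1 -> 0 < tr2 M ->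
  eigvec2 M l x y -> x != 0 \/ y != 0 -> 0 < l.
Proof. by move=> dM trM /eigvec2_char/[apply]; rewrite dM; nra. Qed.

End Positivity.

Lemma lt_of_add_inv_lt (F : realFieldType) (u u' v v' : F) :
  u * u' = 1 -> v * v' = 1 -> 0 < u -> 1 <= v -> u + u' < v + v' -> u < v.
Proof.
move=> uu' vv' u_gt0 v_ge1 lt_sum; rewrite ltNge; apply/negP => v_le_u.
have uv_ge1 : 1 <= u * v by nra.
have u'v'_le1 : u' * v' <= 1.
  have : (u' * v') * (u * v) = 1 by rewrite mulrACA [u' * u]mulrC [v' * v]mulrC uu' vv' mulr1.
  nra.
have : (u - v) * (u' * v' - 1) = (u * u') * v' - u - (v * v') * u' + v by ring.
rewrite uu' vv' !mul1r; nra.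
Qed.

Section Triangular.
Variable F : realFieldType.

Lemma triangular_bounds (al z s be : F) : al * z = 1 -> s * be = 1 -> 0 < al -> 1 <= be ->
  2 <= al + z -> al + z < s + be -> [/\ al < be, z < be & s < 1].
Proof.
move=> alz sbe al_gt0 be_ge1 trA_ge2 trA_lt_trB.
have z_gt0 : 0 < z by nra.
have bes : be * s = 1 by rewrite mulrC.
have zal : z * al = 1 by rewrite mulrC.
split; last by nra.
- by apply: lt_of_add_inv_lt alz bes al_gt0 be_ge1 _; rewrite [be + s]addrC.
- by apply: lt_of_add_inv_lt zal bes z_gt0 be_ge1 _; rewrite addrC [be + s]addrC.
Qed.

Lemma exists_left_subeigvec2 (al x z s t be : F) :
  al * z = 1 -> s * be = 1 -> 0 < al -> 1 <= be -> 0 <= x -> 0 <= t ->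
  2 <= al + z -> al + z < s + be -> al * s + x * t + z * be <= (s + be) ^+ 2 - 3 ->
  exists f1 f2 : F, [/\ 0 < f1, 0 < f2,
    left_strict_subeigvec2 f1 f2 (Mat2 al x 0 z) be &
    left_subeigvec2 f1 f2 (Mat2 s 0 t be) be].
Proof.
move=> alz sbe al_gt0 be_ge1 x_ge0 t_ge0 trA_ge2 trA_lt_trB trAB.
have [al_lt_be z_lt_be s_lt1] := triangular_bounds alz sbe al_gt0 be_ge1 trA_ge2 trA_lt_trB.
rewrite /left_strict_subeigvec2 /left_subeigvec2 /=.
have s_gt0 : 0 < s by nra.
(* For t > 0, (t, be - s) is a left eigenvector of B and the trace hypothesis makes it
   strictly sub-eigen for A; for t = 0, B is diagonal. *)
have [t_gt0|t_le0] := ltrP 0 t.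
  exists t, (be - s); split; try split; nra.
have -> : t = 0 by lra.
exists (be - z), (x + be - z); split; try split; nra.
Qed.

Lemma tr2_word2_flip2 (X Y : mat2 F) w :
  tr2 (word2 X Y w) = tr2 (word2 (conj2 (flip2 F) X) (conj2 (flip2 F) Y) w).
Proof. by rewrite word2_conj2 ?tr2_conj2 // det2_flip2. Qed.

Lemma triangular_trace_lt_nonneg (al x z s t be : F) :
  al * z = 1 -> s * be = 1 -> 0 < al -> 1 <= be -> 0 <= x -> 0 <= t ->
  2 <= al + z -> al + z < s + be -> al * s + x * t + z * be <= (s + be) ^+ 2 - 3 ->
  forall w, tr2 (word2 (Mat2 al x 0 z) (Mat2 s 0 t be) (La :: w)) <
            tr2 (word2 (Mat2 al x 0 z) (Mat2 s 0 t be) (nseq (size w).+1 Lb)).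
Proof.
move=> alz sbe al_gt0 be_ge1 x_ge0 t_ge0 trA_ge2 trA_lt_trB trAB w.
have [f1 [f2 [f1_gt0 f2_gt0 subA subB]]] :=
  exists_left_subeigvec2 alz sbe al_gt0 be_ge1 x_ge0 t_ge0 trA_ge2 trA_lt_trB trAB.
set A := Mat2 al x 0 z in subA *; set B := Mat2 s 0 t be in subB *.
have nA : nonneg2 A by split=> /=; nra.
have nB : nonneg2 B by split=> /=; nra.
have dA : det2 A = 1 by rewrite /det2 /= mulr0 subr0.
have dB : det2 B = 1 by rewrite /det2 /= mul0r subr0.
have be_ge0 : 0 <= be by lra.
have strictW : left_strict_subeigvec2 f1 f2 (word2 A B (La :: w)) (be ^+ (size w).+1).
  rewrite exprS; apply: (left_strict_subeigvec2M be_ge0 (nonneg2_word2 w nA nB) (det2_word2 w dA dB) subA).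
  exact: left_subeigvec2_word2 be_ge0 nA nB (left_strict_subeigvec2W subA) subB w.
have := left_strict_subeigvec2_trace (nonneg2_word2 (La :: w) nA nB) (det2_word2 (La :: w) dA dB)
  f1_gt0 f2_gt0 strictW.
rewrite /B tr2_word2_nseq_lower; set r := be ^+ (size w).+1 => trW.
have r_gt0 : 0 < r by rewrite exprn_gt0 // (lt_le_trans ltr01).
have sr : s ^+ (size w).+1 * r = 1 by rewrite -exprMn sbe expr1n.
by rewrite -(ltr_pM2l r_gt0); lra.
Qed.

Lemma triangular_trace_lt (al x z s t be : F) :
  al * z = 1 -> s * be = 1 -> 0 < al -> 1 <= be -> 0 <= x * t ->
  2 <= al + z -> al + z < s + be -> al * s + x * t + z * be <= (s + be) ^+ 2 - 3 ->
  forall w, tr2 (word2 (Mat2 al x 0 z) (Mat2 s 0 t be) (La :: w)) <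
            tr2 (word2 (Mat2 al x 0 z) (Mat2 s 0 t be) (nseq (size w).+1 Lb)).
Proof.
move=> alz sbe al_gt0 be_ge1 xt_ge0 trA_ge2 trA_lt_trB trAB w.
have [[x_ge0 t_ge0]|[x_le0 t_le0]] : (0 <= x /\ 0 <= t) \/ (x <= 0 /\ t <= 0) by nra.
  exact: triangular_trace_lt_nonneg.
rewrite [ltLHS]tr2_word2_flip2 [ltRHS]tr2_word2_flip2 !conj2_flip2 /= !oppr0.
by apply: triangular_trace_lt_nonneg; rewrite ?mulrNN ?oppr_ge0.
Qed.

End Triangular.

Section ProjectiveLine.
Implicit Types (p q z : P1) (M X Y : mat2 R).

(* The point with homogeneous coordinates (a, b); (0, 0) is sent to oo. *)
Definition pt (a b : R) : P1 := if b == 0 then None else Some (a / b).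

Definition comb p q (s t : R) : P1 :=
  pt (s * hx p + t * hx q) (s * hy p + t * hy q).

Definition cross p q : R := hx p * hy q - hy p * hx q.

Lemma crossC p q : cross q p = - cross p q.
Proof. by rewrite /cross; ring. Qed.

Lemma cross_neq0 p q : p <> q -> cross p q != 0.
Proof.
case: p => [x|]; case: q => [y|] //= neq; rewrite /cross /= ?mulr1 ?mulr0 ?mul1r ?mul0r.
- by rewrite subr_eq0; apply/eqP => exy; apply: neq; rewrite exy.
- by rewrite sub0r oppr_eq0 oner_eq0.
- by rewrite subr0 oner_eq0.
Qed.

Lemma arc_cross p q z : Defs.arc p q z -> cross p z * cross z q * cross p q <= 0.
Proof.
rewrite /Defs.arc; case: p => [x|]; case: q => [y|]; case: z => [u|];
  rewrite /cross /= ?mulr1 ?mulr0 ?mul1r ?mul0r ?subr0 ?andbT //; try lra.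
- case: ifP => [xy /andP[xu uy]|/negbT]; last rewrite -ltNge => yx /orP[xu|uy].
  + by have := @mulr_ge0 _ (u - x) (y - u); rewrite !subr_ge0 => /(_ xu uy); nra.
  + by have := @mulr_ge0 _ (u - x) (x - y); rewrite !subr_ge0 => /(_ xu (ltW yx)); nra.
  + by have := @mulr_ge0 _ (y - u) (x - y); rewrite !subr_ge0 => /(_ uy (ltW yx)); nra.
- by case: ifP => // /negbT; rewrite -ltNge; lra.
Qed.

Lemma pt_coords (a b : R) : a != 0 \/ b != 0 ->
  exists2 lam : R, lam != 0 & hx (pt a b) = lam * a /\ hy (pt a b) = lam * b.
Proof.
move=> ab; rewrite /pt; have [b0|b0] := eqVneq b 0; last first.
  by exists b^-1; rewrite ?invr_eq0 //= mulVf // mulrC.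
have a0 : a != 0 by case: ab; rewrite // b0 eqxx.
by exists a^-1; rewrite ?invr_eq0 //= b0 mulVf // mulr0.
Qed.

Lemma cross_comb p q s t : p <> q -> s * t != 0 ->
  exists2 lam : R, lam != 0 &
    cross p (comb p q s t) * cross (comb p q s t) q * cross p q =
    lam ^+ 2 * (s * t) * cross p q ^+ 3.
Proof.
move=> pq st0; have c0 := cross_neq0 pq.
set a := s * hx p + t * hx q; set b := s * hy p + t * hy q.
have ta : hx p * b - hy p * a = t * cross p q by rewrite /a /b /cross; ring.
have sa : a * hy q - b * hx q = s * cross p q by rewrite /a /b /cross; ring.
have [lam lam0 [ha hb]] : exists2 lam : R, lam != 0 &
    hx (pt a b) = lam * a /\ hy (pt a b) = lam * b.
  apply: pt_coords; apply/orP; rewrite -negb_and; apply: contra st0 => /andP[/eqP a0 /eqP b0].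
  move: sa; rewrite a0 b0 !mul0r subrr => /esym/eqP; rewrite mulf_eq0 (negbTE c0) orbF => /eqP->.
  by rewrite mul0r.
exists lam => //; rewrite /comb -/a -/b.
have -> : cross p (pt a b) = lam * (t * cross p q) by rewrite -ta /cross ha hb; ring.
have -> : cross (pt a b) q = lam * (s * cross p q) by rewrite -sa /cross ha hb; ring.
ring.
Qed.

(* The points s p + t q with st > 0 and those with st < 0 fill the two complementary
   open arcs between p and q. *)
Lemma arc_comb_sign (I : P1 -> bool) p q s1 t1 s2 t2 :
  I = Defs.arc p q \/ I = Defs.arc q p -> p <> q ->
  I (comb p q s1 t1) -> I (comb p q s2 t2) -> 0 <= s1 * t1 * (s2 * t2).
Proof.
move=> arcI pq I1 I2.
have [->|st1] := eqVneq (s1 * t1) 0; first by rewrite mul0r.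
have [->|st2] := eqVneq (s2 * t2) 0; first by rewrite mulr0.
have [lam1 lam1_0 e1] := cross_comb pq st1.
have [lam2 lam2_0 e2] := cross_comb pq st2.
have [eps eps_sq sign_arc] : exists2 eps : R, eps ^+ 2 = 1 &
    forall z, I z -> eps * (cross p z * cross z q * cross p q) <= 0.
  case: arcI => ->; [exists 1 | exists (-1)]; rewrite ?expr1n ?sqrrN ?expr1n // => z.
    by rewrite mul1r; apply: arc_cross.
  by move/arc_cross; rewrite [cross q z]crossC [cross z p]crossC [cross q p]crossC; lra.
have := mulr_le0 (sign_arc _ I1) (sign_arc _ I2); rewrite e1 e2.
set c := cross p q.
have -> : eps * (lam1 ^+ 2 * (s1 * t1) * c ^+ 3) * (eps * (lam2 ^+ 2 * (s2 * t2) * c ^+ 3)) =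
    eps ^+ 2 * (lam1 * lam2 * c ^+ 3) ^+ 2 * (s1 * t1 * (s2 * t2)) by ring.
rewrite eps_sq mul1r pmulr_rge0 // exprn_even_gt0 //=.
by rewrite !mulf_neq0 // cross_neq0.
Qed.

Lemma hxy_neq0 p : hx p != 0 \/ hy p != 0.
Proof. by case: p => [x|] /=; [right | left]; rewrite oner_eq0. Qed.

Lemma le1_refl p : le1 p p.
Proof. by case: p => //= x; rewrite lexx. Qed.

Lemma arc_endpoints p q : Defs.arc p q p /\ Defs.arc p q q.
Proof. by rewrite /Defs.arc !le1_refl; case: ifP => ->; rewrite ?orbT. Qed.

Lemma arcs_endpoints (I : P1 -> bool) p q :
  I = Defs.arc p q \/ I = Defs.arc q p -> I p /\ I q.
Proof. by case=> ->; have [] := arc_endpoints p q; have [] := arc_endpoints q p. Qed.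

Definition basis2 p q : mat2 R := Mat2 (hx p) (hx q) (hy p) (hy q).

Lemma det2_basis2 p q : det2 (basis2 p q) = cross p q.
Proof. by rewrite /det2 /cross /=; ring. Qed.

Definition mob2 M p : P1 := pt (m00 M * hx p + m01 M * hy p) (m10 M * hx p + m11 M * hy p).

Definition arc_invariant X Y p q : Prop :=
  exists2 I : P1 -> bool, I = Defs.arc p q \/ I = Defs.arc q p &
    (forall z, I z -> I (mob2 X z)) /\ (forall z, I z -> I (mob2 Y z)).

Section Basis.
Variables (p q : P1).
Hypothesis pq : p <> q.
Let P := basis2 p q.
Let detP : det2 P != 0.
Proof. by rewrite det2_basis2 cross_neq0. Qed.

Lemma mob2_conj2_l M : mob2 M p = comb p q (m00 (conj2 P M)) (m10 (conj2 P M)).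
Proof.
have := mul2_conj2 detP M; set N := conj2 P M => PN; clearbody N.
have e0 : hx p * m00 N + hx q * m10 N = m00 M * hx p + m01 M * hy p := congr1 (@m00 R) PN.
have e1 : hy p * m00 N + hy q * m10 N = m10 M * hx p + m11 M * hy p := congr1 (@m10 R) PN.
by rewrite /mob2 /comb -e0 -e1; congr pt; ring.
Qed.

Lemma mob2_conj2_r M : mob2 M q = comb p q (m01 (conj2 P M)) (m11 (conj2 P M)).
Proof.
have := mul2_conj2 detP M; set N := conj2 P M => PN; clearbody N.
have e0 : hx p * m01 N + hx q * m11 N = m00 M * hx q + m01 M * hy q := congr1 (@m01 R) PN.
have e1 : hy p * m01 N + hy q * m11 N = m10 M * hx q + m11 M * hy q := congr1 (@m11 R) PN.
by rewrite /mob2 /comb -e0 -e1; congr pt; ring.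
Qed.

Lemma conj2_offdiag_sign X Y : arc_invariant X Y p q ->
  0 <= m00 (conj2 P Y) * m10 (conj2 P Y) * (m01 (conj2 P X) * m11 (conj2 P X)).
Proof.
case=> I arcI [invX invY]; have [Ip Iq] := arcs_endpoints arcI.
by move: (invY _ Ip) (invX _ Iq); rewrite mob2_conj2_l mob2_conj2_r; apply: arc_comb_sign.
Qed.

End Basis.

Lemma trace_lt_of_invariant_arc X Y p q (al be : R) :
  p <> q -> det2 X = 1 -> det2 Y = 1 ->
  eigvec2 X al (hx p) (hy p) -> eigvec2 Y be (hx q) (hy q) -> 0 < al -> 1 <= be ->
  arc_invariant X Y p q ->
  2 <= tr2 X -> tr2 X < tr2 Y -> tr2 (mul2 X Y) <= tr2 Y ^+ 2 - 3 ->
  forall w, tr2 (word2 X Y (La :: w)) < tr2 (word2 X Y (nseq (size w).+1 Lb)).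
Proof.
move=> pq dX dY eX eY al_gt0 be_ge1 invXY trX trXY trXY2 w.
have detP : det2 (basis2 p q) != 0 by rewrite det2_basis2 cross_neq0.
have := conj2_offdiag_sign pq invXY.
have [A10 A00] := conj2_eigvec_l detP eX; have [B01 B11] := conj2_eigvec_r detP eY.
set A := conj2 _ X; set B := conj2 _ Y => sign.
have trAB : tr2 (mul2 A B) = tr2 (mul2 X Y) by rewrite -conj2M // tr2_conj2.
have trA : tr2 A = tr2 X by rewrite tr2_conj2.
have trB : tr2 B = tr2 Y by rewrite tr2_conj2.
have dA : det2 A = 1 by rewrite det2_conj2.
have dB : det2 B = 1 by rewrite det2_conj2.
have trw v : tr2 (word2 X Y v) = tr2 (word2 A B v) by rewrite word2_conj2 // tr2_conj2.
have eA : A = Mat2 al (m01 A) 0 (m11 A) by apply: mat2_ext.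
have eB : B = Mat2 (m00 B) 0 (m10 B) be by apply: mat2_ext.
rewrite !trw; clearbody A B; move: trAB trA trB dA dB sign; rewrite eA eB /det2 /=.
set x := m01 A; set z := m11 A; set s := m00 B; set t := m10 B.
rewrite mulr0 mul0r !subr0 => trAB trA trB alz sbe sign.
rewrite -trB -trAB in trXY2; rewrite -trA -trB in trXY; rewrite -trA in trX.
rewrite /tr2 /= in trX trXY trXY2.
apply: triangular_trace_lt => //; try lra.
have z_gt0 : 0 < z by nra.
have s_gt0 : 0 < s by nra.
by move: sign; rewrite mulrACA [t * _]mulrC -mulrACA pmulr_rge0 // mulr_gt0.
Qed.

(* tr w(A, B) = tr (rev w)(A^-1, B^-1), and the repelling points of A, B are the
   attracting points of their inverses. *)
Lemma trace_lt_of_invariant_arc_adj X Y p q (al be : R) :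
  p <> q -> det2 X = 1 -> det2 Y = 1 ->
  eigvec2 X al (hx p) (hy p) -> eigvec2 Y be (hx q) (hy q) -> 0 < al -> 0 < be <= 1 ->
  arc_invariant (adj2 X) (adj2 Y) p q ->
  2 <= tr2 X -> tr2 X < tr2 Y -> tr2 (mul2 X Y) <= tr2 Y ^+ 2 - 3 ->
  forall w, tr2 (word2 X Y (La :: w)) < tr2 (word2 X Y (nseq (size w).+1 Lb)).
Proof.
move=> pq dX dY eX eY al_gt0 /andP[be_gt0 be_le1] invXY trX trXY trXY2 w.
have tr_rev v : tr2 (word2 X Y v) = tr2 (word2 (adj2 X) (adj2 Y) (rev v)).
  by rewrite -adj2_word2 tr2_adj.
rewrite !tr_rev rev_cons tr2_word2_rcons rev_nseq -(size_rev w).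
have eX' := eigvec2_adj dX (lt0r_neq0 al_gt0) eX.
have eY' := eigvec2_adj dY (lt0r_neq0 be_gt0) eY.
apply: (trace_lt_of_invariant_arc pq _ _ eX' eY' _ _ invXY _ _ _ (rev w));
  rewrite ?det2_adj ?tr2_adj ?invr_gt0 ?invf_ge1 //.
by rewrite -adj2M tr2_adj tr2C.
Qed.

End ProjectiveLine.

(* Otherwise A and B share an eigenbasis and commute, or B is parabolic. *)
Lemma neq_repelling_of_eq_attracting (X Y : mat2 R) ap am bm (al al' be be' : R) :
  det2 Y = 1 -> 2 < tr2 Y -> mul2 X Y <> mul2 Y X ->
  eigvec2 X al (hx ap) (hy ap) -> eigvec2 X al' (hx am) (hy am) ->
  eigvec2 Y be (hx ap) (hy ap) -> eigvec2 Y be' (hx bm) (hy bm) ->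
  1 <= be -> be' <= 1 -> am <> bm.
Proof.
move=> dY trY XY eXp eXm eYp eYm be_ge1 be'_le1 ambm; subst bm.
have [apam|apam] := eqVneq ap am.
  subst am; have be'_be := eigvec2_unique eYm eYp (hxy_neq0 ap).
  have := eigvec2_char eYp (hxy_neq0 ap); rewrite dY; nra.
have detP : det2 (basis2 ap am) != 0 by rewrite det2_basis2 cross_neq0 //; apply/eqP.
exact/XY/(common_eigvec2_commute detP eXp eXm eYp eYm).
Qed.

Lemma trace_lt_of_fixed_points (X Y : mat2 R) ap am bp bm (lA lA' lB lB' : R) :
  det2 X = 1 -> det2 Y = 1 -> mul2 X Y <> mul2 Y X ->
  2 <= tr2 X -> tr2 X < tr2 Y -> tr2 (mul2 X Y) <= tr2 Y ^+ 2 - 3 ->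
  eigvec2 X lA (hx ap) (hy ap) -> eigvec2 X lA' (hx am) (hy am) ->
  eigvec2 Y lB (hx bp) (hy bp) -> eigvec2 Y lB' (hx bm) (hy bm) ->
  1 <= `|lB| -> `|lB'| <= 1 ->
  ap = bp \/ arc_invariant X Y ap bp ->
  am = bm \/ arc_invariant (adj2 X) (adj2 Y) am bm ->
  forall w, tr2 (word2 X Y (La :: w)) < tr2 (word2 X Y (nseq (size w).+1 Lb)).
Proof.
move=> dX dY XY trX trXY trXY2 eA eA' eB eB' lB_ge1 lB'_le1 invp invm.
have trX_gt0 : 0 < tr2 X by lra.
have trY_gt0 : 0 < tr2 Y by lra.
have lA_gt0 := eigvec2_gt0 dX trX_gt0 eA (hxy_neq0 ap).
have lA'_gt0 := eigvec2_gt0 dX trX_gt0 eA' (hxy_neq0 am).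
have lB_gt0 := eigvec2_gt0 dY trY_gt0 eB (hxy_neq0 bp).
have lB'_gt0 := eigvec2_gt0 dY trY_gt0 eB' (hxy_neq0 bm).
rewrite gtr0_norm // in lB_ge1; rewrite gtr0_norm // in lB'_le1.
have [apbp|apbp] := eqVneq ap bp.
  subst bp; have trY_gt2 : 2 < tr2 Y by lra.
  have ambm := neq_repelling_of_eq_attracting dY trY_gt2 XY eA eA' eB eB' lB_ge1 lB'_le1.
  have lB'_in : 0 < lB' <= 1 by rewrite lB'_gt0.
  case: invm => // invm.
  exact: trace_lt_of_invariant_arc_adj ambm dX dY eA' eB' lA'_gt0 lB'_in invm trX trXY trXY2.
case: invp => [apbp'|invp]; first by rewrite apbp' eqxx in apbp.
exact: trace_lt_of_invariant_arc (elimN eqP apbp) dX dY eA eB lA_gt0 lB_ge1 invp trX trXY trXY2.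
Qed.

Section IntegerMatrices.
Implicit Types (A B M N : 'M[int]_2).

Definition mat2_of_int M : mat2 R := Mat2 (ent M 0 0) (ent M 0 1) (ent M 1 0) (ent M 1 1).

Lemma sum_ord2 (V : nmodType) (F : 'I_2 -> V) : \sum_(i < 2) F i = F 0 + F 1.
Proof. by rewrite big_ord_recl big_ord1; congr (_ + F _); apply/val_inj. Qed.

Lemma mat2_of_intM M N : mat2_of_int (M *m N) = mul2 (mat2_of_int M) (mat2_of_int N).
Proof. by apply: mat2_ext; rewrite /= /ent !mxE sum_ord2 intrD !intrM. Qed.

Lemma mat2_of_int1 : mat2_of_int 1 = one2 R.
Proof. by apply: mat2_ext; rewrite /= /ent !mxE. Qed.

Lemma mat2_of_int_phi A B w : mat2_of_int (phi A B w) = word2 (mat2_of_int A) (mat2_of_int B) w.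
Proof.
elim: w => [|l w IH]; first by rewrite /phi big_nil mat2_of_int1.
by rewrite /phi big_cons -mulmxE mat2_of_intM -/(phi A B w) IH; case: l.
Qed.

Lemma tr_mat2_of_int M : (\tr M)%:~R = tr2 (mat2_of_int M) :> R.
Proof. by rewrite /mxtrace sum_ord2 intrD. Qed.

Lemma trw_mat2_of_int A B w : (trw A B w)%:~R = tr2 (word2 (mat2_of_int A) (mat2_of_int B) w) :> R.
Proof. by rewrite /trw tr_mat2_of_int mat2_of_int_phi. Qed.

Lemma det_mat2_of_int M : (\det M)%:~R = det2 (mat2_of_int M) :> R.
Proof.
rewrite (expand_det_row _ 0) sum_ord2 /cofactor !det_mx11 !mxE /det2 /ent /=.
have -> : lift 0 0 = 1 :> 'I_2 by apply/val_inj.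
have -> : lift 1 0 = 0 :> 'I_2 by apply/val_inj.
by rewrite expr0 expr1 mul1r mulN1r /ent intrD mulrN intrN !intrM.
Qed.

Lemma mat2_of_int_inj : injective mat2_of_int.
Proof.
move=> M N eMN; apply/matrixP => i j.
have ord2 (k : 'I_2) : k = 0 \/ k = 1 by case: k => [[|[|k]] hk]; [left | right | by []]; apply/val_inj.
have e00 := congr1 (@m00 R) eMN; have e01 := congr1 (@m01 R) eMN.
have e10 := congr1 (@m10 R) eMN; have e11 := congr1 (@m11 R) eMN.
by case: (ord2 i) => ->; case: (ord2 j) => ->; apply: (@intr_inj R).
Qed.

Lemma mat2_of_int_invmx A : \det A = 1 -> mat2_of_int (invmx A) = adj2 (mat2_of_int A).
Proof.
move=> dA; have uA : A \in unitmx by rewrite unitmxE dA unitr1.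
apply: adj2_unique; first by rewrite -det_mat2_of_int dA.
by rewrite -mat2_of_intM mulmxV // mat2_of_int1.
Qed.

Lemma mob_mat2_of_int M p : mob M p = mob2 (mat2_of_int M) p.
Proof. by case: p => [x|]; rewrite /mob /mob2 /pt /= ?mulr1 ?mulr0 ?addr0. Qed.

Lemma I_exists_mat2_of_int A B p q : I_exists A B p q ->
  p = q \/ arc_invariant (mat2_of_int A) (mat2_of_int B) p q.
Proof.
case=> [|[I [arcI [invA invB]]]]; [left | right] => //.
by exists I => //; split=> z Iz; rewrite -mob_mat2_of_int; [apply: invA | apply: invB].
Qed.

End IntegerMatrices.

Lemma size_ab_word ks : size (ab_word ks) = (sumn ks + size ks)%N.
Proof.
elim: ks => [|k ks IH] //=.
by rewrite size_cat /= size_nseq -/(ab_word ks) IH addnS addnA.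
Qed.

Lemma coherent_trace_lt (A B : 'M[int]_2) :
  SL2Z A -> SL2Z B -> A *m B != B *m A -> coherently_oriented A B ->
  2 <= \tr A -> \tr A < \tr B -> trw A B [:: La; Lb] < trw A B [:: Lb; Lb] ->
  forall w, trw A B (La :: w) < trw A B (nseq (size w).+1 Lb).
Proof.
move=> dA dB AB coh trA trAB hab w; rewrite -(ltr_int R) !trw_mat2_of_int.
case: coh => ap [am [bp [bm [[lA [_ eA]] [[lA' [lA'_le1 eA']] [[lB [lB_ge1 eB]]
  [[lB' [lB'_le1 eB']] [/I_exists_mat2_of_int invp /I_exists_mat2_of_int invm]]]]]]]].
rewrite !mat2_of_int_invmx // in invm.
have dY : det2 (mat2_of_int B) = 1 by rewrite -det_mat2_of_int dB.
apply: (trace_lt_of_fixed_points (X := mat2_of_int A) _ dY _ _ _ _ eA eA' eB eB'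
  lB_ge1 lB'_le1 invp invm w).
- by rewrite -det_mat2_of_int dA.
- by rewrite -!mat2_of_intM => /mat2_of_int_inj /eqP; apply/negP.
- by move: trA; rewrite -(ler_int R) tr_mat2_of_int.
- by rewrite -!tr_mat2_of_int ltr_int.
move: hab; rewrite -lezD1 -(ler_int R) intrD !trw_mat2_of_int /= !mul2_1 tr2_sqr dY.
by lra.
Qed.

Theorem lemma5p6 (A B : 'M[int]_2) :
  SL2Z A -> SL2Z B -> A *m B != B *m A ->
  well_oriented A B ->
  2 <= \tr A -> \tr A < \tr B ->
  trw A B [:: La; Lb] < trw A B [:: Lb; Lb] ->
  forall ks : seq nat, (1 <= size ks)%N -> all (fun k => 1 <= k)%N ks ->
    trw A B (ab_word ks) < trw A B (nseq (sumn ks + size ks) Lb).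
Proof.
move=> dA dB AB [coh _] trA trAB hab [//|k ks] _ _.
have := coherent_trace_lt dA dB AB coh trA trAB hab (nseq k Lb ++ ab_word ks).
by rewrite size_cat size_nseq size_ab_word /= addnS addnA.
Qed.
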